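(* Let $G$ be a finite abelian group of type $(m_1,\dots,m_r)$. Then $$\operatorname{diam}^+(G)=\sum_{i=1}^r (m_i-1).$$
   Context: Groups are written additively. A finite abelian group $G$ has type $(m_1,\dots,m_r)$ if $G\cong \mathbb{Z}_{m_1}\oplus\dots\oplus\mathbb{Z}_{m_r}$ with $1\neq m_1\mid m_2\mid\dots\mid m_r$; $r$ is the rank $\operatorname{rk}(G)$. For $A\subseteq G$ let $A_0:=A\cup\{0\}$ and for $\rho\in\mathbb{N}_0$ let $\langle A\rangle^+_\rho:=\rho A_0=\{a_1+\dots+a_\rho: a_i\in A_0\}$ (so $\langle A\rangle_0^+=\{0\}$), the set of elements expressible as a sum of at most $\rho$ elements of $A$. The positive diameter of $G$ with respect to $A$ is $\operatorname{diam}^+_A(G):=\min\{\rho\in\mathbb{N}_0:\langle A\rangle^+_\rho=G\}$ (with $\min\varnothing=\infty$, so it is finite iff $A$ generates $G$). The absolute diameter is $\operatorname{diam}^+(G):=\max\{\operatorname{diam}^+_A(G): A\subseteq G,\ \langle A\rangle=G\}$. *)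

(* Groups are finite groups (finGroupType), written
   multiplicatively; "sum" of the paper = group product, 0 = 1. *)
From mathcomp Require Import all_boot all_order all_fingroup all_solvable.
Set Implicit Arguments. Unset Strict Implicit. Unset Printing Implicit Defensive.
Local Open Scope group_scope.

Fixpoint pos_span (gT : finGroupType) (A : {set gT}) (rho : nat) : {set gT} :=
  match rho with
  | 0 => [set 1]
  | n.+1 => pos_span A n * (1 |: A)
  end.

Definition is_posdiam (gT : finGroupType) (G A : {set gT}) (d : nat) : Prop :=
  pos_span A d = G /\ (forall rho, pos_span A rho = G -> (d <= rho)%N).

Definition is_absdiam (gT : finGroupType) (G : {set gT}) (d : nat) : Prop :=
  (exists A : {set gT}, [/\ A \subset G, <<A>> = G & is_posdiam G A d]) /\
  (forall A : {set gT}, A \subset G -> <<A>> = G ->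
     exists d', is_posdiam G A d' /\ (d' <= d)%N).

Definition has_type (gT : finGroupType) (G : {set gT}) (m : seq nat) : Prop :=
  [/\ all (fun x => 1 < x)%N m, sorted dvdn m &
      exists b : seq gT, \big[dprod/1]_(x <- b) <[x]> = G /\ map order b = m].

From mathcomp Require Import all_boot all_order all_fingroup all_solvable.
From mathcomp Require Import zify.
Set Implicit Arguments. Unset Strict Implicit. Unset Printing Implicit Defensive.

(* Write d(G) for the sum of (m_i - 1) over the invariant factors m_i of G
   ([type_weight (abelian_type G)]).
   Upper bound: let A generate G and pick a <> 1 in A.  By induction on |G|,
   sums of at most d(G / <a>) elements of A reach every coset of <a>, and at
   most #[a] - 1 further copies of a then reach every element.  The invariant
   factors of G / <a> interlace with those of G (the p-ranks of the 'Mho^n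
   subgroups drop by at most one), and a telescoping estimate turns this into
   d(G / <a>) + #[a] - 1 <= d(G).
   Lower bound: for a basis b of G, the element prod_x x^(#[x] - 1) has a
   unique decomposition in the direct product of the <x>, so every expression
   of it as a sum of elements of b uses each x at least #[x] - 1 times. *)

(* Chains are read through [nth 1], i.e. padded with the trivial factor 1. *)
Definition dvdn_chain (L : seq nat) :=
  all (fun x => 1 < x) L && sorted (fun a b => b %| a) L.

Definition type_weight (L : seq nat) := \sum_(x <- L) (x - 1).

Lemma dvdn_chain_nth_gt1 L k : dvdn_chain L -> (1 < nth 1 L k) = (k < size L).
Proof.
case/andP=> L_gt1 _; case: (ltnP k (size L)) => [ltkL | leLk].
  exact: allP L_gt1 _ (mem_nth 1 ltkL).
by rewrite nth_default.
Qed.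

Lemma dvdn_chain_nth_gt0 L k : dvdn_chain L -> 0 < nth 1 L k.
Proof.
move=> chainL; case: (ltnP k (size L)) => [ltkL | leLk]; last by rewrite nth_default.
by apply: ltnW; rewrite dvdn_chain_nth_gt1.
Qed.

Lemma logn_nth_dvdn_chain p n L k : dvdn_chain L ->
  (n < logn p (nth 1 L k)) = (k < count (fun x => n < logn p x) L).
Proof.
elim: L k => [|x L IHL] k /=; first by rewrite nth_nil logn1.
case/andP=> /andP[x_gt1 L_gt1] chain_xL.
have /IHL IH : dvdn_chain L by apply/andP; split; last exact: path_sorted chain_xL.
have L_dvd_x : all (dvdn^~ x) L.
  by apply: order_path_min chain_xL => a b c /= ba cb; apply: dvdn_trans cb ba.
have [lt_n_x | le_x_n] /= := ltnP n (logn p x).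
  by case: k => [|k] //=; rewrite IH add1n ltnS.
have count0 : count (fun y => n < logn p y) L = 0.
  apply/eqP; rewrite -leqn0 leqNgt -has_count; apply/hasPn => y Ly.
  by rewrite -leqNgt (leq_trans _ le_x_n) // dvdn_leq_log ?(ltnW x_gt1) ?(allP L_dvd_x).
by case: k => [|k] /=; rewrite ?IH count0 // ltnNge le_x_n.
Qed.

Lemma dvdn_nth_shift L1 L2 e k : dvdn_chain L1 -> dvdn_chain L2 ->
  (forall p n, prime p ->
     count (fun x => n < logn p x) L1 <= count (fun x => n < logn p x) L2 + e) ->
  nth 1 L1 (k + e) %| nth 1 L2 k.
Proof.
move=> chain1 chain2 le_count.
apply/dvdn_partP=> [|p]; first exact: dvdn_chain_nth_gt0.
rewrite mem_primes => /andP[p_pr _].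
rewrite p_part pfactor_dvdn // ?dvdn_chain_nth_gt0 // leqNgt.
set n := logn p (nth 1 L2 k).
rewrite logn_nth_dvdn_chain //; apply/negP => /leq_trans/(_ (le_count p n p_pr)).
by rewrite ltn_add2r -logn_nth_dvdn_chain // ltnn.
Qed.

Lemma eq_dvdn_chain L1 L2 : dvdn_chain L1 -> dvdn_chain L2 ->
  (forall p n, prime p ->
     count (fun x => n < logn p x) L1 = count (fun x => n < logn p x) L2) ->
  L1 = L2.
Proof.
move=> chain1 chain2 eq_count.
have eq_nth k : nth 1 L1 k = nth 1 L2 k.
  apply/eqP; rewrite eqn_dvd -{1 3}[k]addn0.
  by rewrite !dvdn_nth_shift // => p n p_pr; rewrite addn0 eq_count.
have eq_size : size L1 = size L2.
  have lt_size k : (k < size L1) = (k < size L2).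
    by rewrite -(dvdn_chain_nth_gt1 k chain1) -(dvdn_chain_nth_gt1 k chain2) eq_nth.
  by apply/eqP; rewrite eqn_leq leqNgt lt_size ltnn leqNgt -lt_size ltnn.
by apply: (eq_from_nth (x0 := 1)) => // k _.
Qed.

Lemma big_nth_pad (R T : Type) (idx : R) (op : Monoid.law idx) (F : T -> R) x0 L N :
  F x0 = idx -> size L <= N ->
  \big[op/idx]_(x <- L) F x = \big[op/idx]_(k < N) F (nth x0 L k).
Proof.
move=> Fx0; elim: L N => [|x L IHL] N.
  by rewrite big_nil big1 // => k _; rewrite nth_nil.
case: N => [|N] //= le_L_N.
by rewrite big_cons big_ord_recl (IHL N).
Qed.

(* M and Q are the padded invariant factors of G and G / <a>; then t = #[a]. *)
Lemma interlacing_weight_bound s (M Q : nat -> nat) :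
  (forall k, 0 < M k) -> (forall k, 0 < Q k) ->
  (forall k, Q k %| M k) -> (forall k, M k.+1 %| Q k) ->
  (forall k, s <= k -> M k = 1) ->
  exists t, [/\ \prod_(k < s) M k = t * \prod_(k < s) Q k, t <= M 0 &
     \sum_(k < s) (Q k - 1) + t <= \sum_(k < s) (M k - 1) + 1].
Proof.
elim: s M Q => [|s IHs] M Q M_gt0 Q_gt0 QM MQ M1.
  by exists 1; rewrite !big_ord0 M1.
have [t' [prodM' le_t'_M1 sum']] := IHs (M \o succn) (Q \o succn)
  (fun k => M_gt0 _) (fun k => Q_gt0 _) (fun k => QM _) (fun k => MQ _)
  (fun k le_s_k => M1 k.+1 le_s_k).
have [t0 defM0] := dvdnP (QM 0).
have le_t'_Q0 : t' <= Q 0 := leq_trans le_t'_M1 (dvdn_leq (Q_gt0 0) (MQ 0)).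
have t0_gt0 : 0 < t0 by move: (M_gt0 0); rewrite defM0 muln_gt0 => /andP[].
exists (t0 * t'); rewrite !big_ord_recl; split.
- by rewrite prodM' defM0 mulnACA.
- by rewrite defM0 leq_mul2l le_t'_Q0 orbT.
- have exchange : Q 0 + t0 * t' <= t0 * Q 0 + t' by nia.
  move: sum' (Q_gt0 0); rewrite /= defM0.
  move: (\sum_(_ < s) _) (\sum_(_ < s) _) (t0 * t') (t0 * Q 0) exchange.
  lia.
Qed.

Local Open Scope group_scope.

Section PRankOfMho.
Variable gT : finGroupType.
Implicit Types (G : {group gT}) (x : gT).

Lemma p_rank_Mho_cycle p n x : prime p ->
  'r_p('Mho^n(<[x]>)) = (n < logn p #[x])%N.
Proof.
move=> p_pr; pose y := x.`_p; have p_y : p.-elt y by apply: p_elt_constt.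
have cxx := cycle_abelian x.
have defX : <[y]> \x <[x.`_p^']> = <[x]>.
  have co_y : coprime #[y] #[x.`_p^'] by rewrite !order_constt coprime_partC.
  rewrite dprodE ?coprime_TIg //.
    by rewrite -cycleM ?consttC //; apply: (centsP cxx); apply: mem_cycle.
  by apply: (sub_abelian_cent2 cxx); rewrite cycle_subG mem_cycle.
rewrite -(p_rank_dprod p (Mho_dprod n defX)).
have -> : 'r_p('Mho^n(<[x.`_p^']>)) = 0%N.
  apply/eqP; rewrite -leqn0 (leq_trans (p_rankS p (Mho_sub n _))) //.
  by rewrite leqNgt p_rank_gt0 -p'groupEpi /pgroup -orderE; apply: p_elt_constt.
rewrite addn0 /= (Mho_p_cycle n p_y) -rank_pgroup; last first.
  by rewrite /pgroup -orderE; apply: p_eltX.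
rewrite rank_cycle -order_dvdn order_constt p_part dvdn_Pexp2l ?prime_gt1 //.
by rewrite ltnNge.
Qed.

Lemma p_rank_Mho_bigdprod_cycle p n (b : seq gT) G : prime p ->
  \big[dprod/1]_(x <- b) <[x]> = G ->
  'r_p('Mho^n(G)) = count (fun x => n < logn p #[x])%N b.
Proof.
move=> p_pr; elim: b G => [|x b IHb] G.
  by rewrite big_nil => <-; rewrite Mho1 p_rank1.
rewrite big_cons => defG; case/dprodP: (defG) => [[_ H _ defH] _ _ _].
rewrite defH in defG.
by rewrite -(p_rank_dprod p (Mho_dprod n defG)) p_rank_Mho_cycle // (IHb H).
Qed.

Lemma p_rank_Mho_quotient_cycle p n G a : abelian G -> a \in G ->
  ('r_p('Mho^n(G / <[a]>)) <= 'r_p('Mho^n(G)) <= 'r_p('Mho^n(G / <[a]>)) + 1)%N.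
Proof.
move=> cGG Ga; have nCG : G \subset 'N(<[a]>).
  by rewrite cents_norm // (sub_abelian_cent2 cGG) ?cycle_subG.
rewrite -(morphim_Mho n (coset_morphism <[a]>) nCG) -[_ @* _]/('Mho^n(G) / <[a]>).
apply/andP; split.
  by apply: quotient_p_rank_abelian; apply: abelianS (Mho_sub n G) cGG.
have := p_rank_quotient p (subset_trans (Mho_sub n G) nCG) (H := <[a]>%G).
rewrite leq_subLR => /leq_trans-> //; rewrite addnC leq_add2l.
by rewrite (leq_trans (p_rank_le_rank p _)) // rank_cycle leq_b1.
Qed.

End PRankOfMho.

Section AbelianType.
Variable gT : finGroupType.
Implicit Types (G : {group gT}) (b : seq gT).

Lemma dvdn_chain_abelian_type (A : {set gT}) : dvdn_chain (abelian_type A).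
Proof. by rewrite /dvdn_chain abelian_type_gt1 abelian_type_dvdn_sorted. Qed.

Lemma count_logn_abelian_type p n G : abelian G -> prime p ->
  count (fun x => n < logn p x)%N (abelian_type G) = 'r_p('Mho^n(G)).
Proof.
move=> cGG p_pr; have [b defG <-] := abelian_structure cGG.
by rewrite count_map (p_rank_Mho_bigdprod_cycle n p_pr defG).
Qed.

Lemma prod_abelian_type G : abelian G -> (\prod_(x <- abelian_type G) x)%N = #|G|.
Proof.
move=> cGG; have [b defG <-] := abelian_structure cGG.
by rewrite big_map -(bigdprod_card defG).
Qed.

Lemma abelian_type_bigdprod_cycle b G : abelian G ->
  all (fun x => 1 < #[x])%N b -> sorted dvdn (map order b) ->
  \big[dprod/1]_(x <- b) <[x]> = G -> abelian_type G = rev (map order b).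
Proof.
move=> cGG b_gt1 b_sorted defG; apply: eq_dvdn_chain => [||p n p_pr].
- exact: dvdn_chain_abelian_type.
- by rewrite /dvdn_chain all_rev all_map rev_sorted b_gt1.
rewrite count_rev count_map count_logn_abelian_type //.
exact: p_rank_Mho_bigdprod_cycle.
Qed.

End AbelianType.

Section QuotientByCycle.
Local Open Scope nat_scope.

Lemma type_weight_quotient_cycle (gT : finGroupType) (G : {group gT}) a :
  abelian G -> a \in G ->
  type_weight (abelian_type (G / <[a]>)%g) + #[a] <= type_weight (abelian_type G) + 1.
Proof.
move=> cGG Ga; set Q := (G / <[a]>)%G; set LG := abelian_type G; set LH := abelian_type Q.
have cQQ : abelian Q := quotient_abelian _ cGG.
have chainG := dvdn_chain_abelian_type G; have chainH := dvdn_chain_abelian_type Q.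
have counts p n (cnt := count (fun x => n < logn p x)) : prime p ->
    cnt LH <= cnt LG <= cnt LH + 1.
  by move=> p_pr; rewrite /cnt !count_logn_abelian_type ?p_rank_Mho_quotient_cycle.
have dvd_HG k : nth 1 LH k %| nth 1 LG k.
  have := @dvdn_nth_shift LH LG 0 k chainH chainG; rewrite addn0.
  by apply=> p n /(counts p n); rewrite addn0 => /andP[].
have dvd_GH k : nth 1 LG k.+1 %| nth 1 LH k.
  have := @dvdn_nth_shift LG LH 1 k chainG chainH; rewrite addn1.
  by apply=> p n /(counts p n) /andP[].
pose s := size LG + size LH.
have [le_LG_s le_LH_s] : size LG <= s /\ size LH <= s by rewrite leq_addr leq_addl.
have [t [prodG _ weightG]] := @interlacing_weight_bound s (nth 1 LG) (nth 1 LH)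
  (fun k => dvdn_chain_nth_gt0 k chainG) (fun k => dvdn_chain_nth_gt0 k chainH)
  dvd_HG dvd_GH (fun k le_s_k => nth_default 1 (leq_trans le_LG_s le_s_k)).
have cardG : #|G| = t * #|Q|.
  rewrite -!prod_abelian_type // -/LG -/LH.
  rewrite (big_nth_pad muln (F := id) (x0 := 1) erefl le_LG_s).
  by rewrite (big_nth_pad muln (F := id) (x0 := 1) erefl le_LH_s) prodG.
have <- : t = #[a].
  have nCG : G \subset 'N(<[a]>).
    by rewrite cents_norm // (sub_abelian_cent2 cGG) ?cycle_subG.
  apply/eqP; rewrite -(eqn_pmul2r (cardG_gt0 Q)) -cardG.
  by rewrite card_quotient // orderE Lagrange ?cycle_subG.
pose F x := x - 1; rewrite /type_weight.
rewrite (big_nth_pad addn (F := F) (x0 := 1) erefl le_LG_s).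
by rewrite (big_nth_pad addn (F := F) (x0 := 1) erefl le_LH_s).
Qed.

End QuotientByCycle.

Section PositiveSpan.
Variable gT : finGroupType.
Implicit Types (A B : {set gT}) (H : {group gT}).

Lemma pos_span1 A k : 1 \in pos_span A k.
Proof.
elim: k => [|k IHk] /=; first exact: set11.
by rewrite -[X in X \in _]mulg1 mem_mulg ?setU11.
Qed.

Lemma pos_span_sub_gen A k : pos_span A k \subset <<A>>.
Proof.
elim: k => [|k IHk] /=; first by rewrite sub1G.
rewrite mul_subG // subUset sub1G; exact: subset_gen.
Qed.

Lemma pos_span_leq A j k : (j <= k)%N -> pos_span A j \subset pos_span A k.
Proof.
elim: k => [|k IHk]; first by rewrite leqn0 => /eqP->.
rewrite leq_eqVlt => /predU1P[-> // | /IHk le_j_k].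
exact: subset_trans le_j_k (mulg_subl _ (setU11 _ _)).
Qed.

Lemma pos_spanD A j k : pos_span A (j + k) = pos_span A j * pos_span A k.
Proof. by elim: k => [|k IHk] /=; rewrite ?addn0 ?mulg1 // addnS /= IHk mulgA. Qed.

Lemma mem_pos_span_expg A a k : a \in A -> a ^+ k \in pos_span A k.
Proof.
by move=> Aa; elim: k => [|k IHk] /=; rewrite ?set11 // expgSr mem_mulg ?setU1r.
Qed.

Lemma quotient_pos_span A H k :
  A \subset 'N(H) -> pos_span A k / H = pos_span (A / H) k.
Proof.
move=> nHA; elim: k => [|k IHk] /=; first exact: quotient1.
by rewrite quotientMr ?subUset ?sub1G // IHk quotientU quotient1.
Qed.

Lemma pos_span_setU1_cent x B k y : B \subset 'C[x] ->
  y \in pos_span (x |: B) k ->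
  exists2 i, (i <= k)%N & exists2 h, h \in pos_span B (k - i) & y = x ^+ i * h.
Proof.
move=> cxB; elim: k y => [|k IHk] y /=.
  by move/set1P->; exists 0%N => //; exists 1; rewrite ?set11 ?mulg1.
case/mulsgP=> y1 z /IHk[i le_i_k [h span_h ->]] Bz ->.
have cxh : commute x h.
  apply/commute_sym/cent1P; apply: subsetP h span_h.
  by rewrite (subset_trans (pos_span_sub_gen _ _)) ?gen_subG.
case/setU1P: Bz => [-> | /setU1P[-> | Bz]].
- exists i; first exact: leqW.
  by exists h; rewrite ?mulg1 // (subsetP (pos_span_leq _ (leq_sub2r i (leqnSn k)))).
- exists i.+1 => //; exists h; first by rewrite subSS.
  by rewrite expgSr -!mulgA cxh.
exists i; first exact: leqW.
by exists (h * z); rewrite ?mulgA // subSn //= mem_mulg ?setU1r.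
Qed.

End PositiveSpan.

Lemma pos_span_type_weight (gT : finGroupType) (G : {group gT}) (A : {set gT}) :
  abelian G -> A \subset G -> <<A>> = G ->
  pos_span A (type_weight (abelian_type G)) = G.
Proof.
have [n] := ubnP #|G|; elim: n gT G A => // n IHn gT G A ltGn cGG sAG genA.
apply/eqP; rewrite eqEsubset {1}(subset_trans (pos_span_sub_gen _ _)) ?genA //=.
have [A1 | /subsetPn[a Aa a_ntriv]] := boolP (A \subset [1]).
  have G1 : G \subset [1] by rewrite -genA gen_subG.
  by rewrite (subset_trans G1) // sub1set pos_span1.
have Ga := subsetP sAG a Aa.
have nCG : G \subset 'N(<[a]>).
  by rewrite cents_norm // (sub_abelian_cent2 cGG) ?cycle_subG.
have nCA := subset_trans sAG nCG.
set dQ := type_weight (abelian_type (G / <[a]>)).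
have spanQ : pos_span A dQ / <[a]> = G / <[a]>.
  rewrite quotient_pos_span //; apply: IHn; rewrite ?quotient_abelian ?quotientS //.
    rewrite -ltnS (leq_trans _ ltGn) // ltnS ltn_quotient ?cycle_subG // cycle_eq1.
    by apply: contraNneq a_ntriv => ->; apply: set11.
  by rewrite -quotient_gen ?genA.
apply/subsetP => g Gg; have Ng := subsetP nCG g Gg.
have : coset <[a]> g \in pos_span A dQ / <[a]> by rewrite spanQ mem_quotient.
case/morphimP=> x Nx span_x /= eq_gx.
have [_ /cycleP[i ->] ->] := kercoset_rcoset Ng Nx eq_gx.
rewrite -expg_mod_order; set j := (i %% #[a])%N.
have lt_j_a : (j < #[a])%N by rewrite ltn_pmod ?order_gt0.
have cax : commute (a ^+ j) x.
  apply: (centsP cGG); rewrite ?groupX //.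
  by rewrite -genA (subsetP (pos_span_sub_gen _ _) _ span_x).
have le_weight : (dQ + j <= type_weight (abelian_type G))%N.
  have := type_weight_quotient_cycle cGG Ga; rewrite -/dQ addn1 => le_dQa.
  by rewrite -ltnS (leq_trans _ le_dQa) // -addnS leq_add2l.
apply: subsetP (pos_span_leq A le_weight) _ _.
by rewrite cax pos_spanD mem_mulg ?mem_pos_span_expg.
Qed.

Section LowerBound.
Variable gT : finGroupType.
Implicit Types (G : {group gT}) (b : seq gT).

Lemma bigdprod_cycle_gen b G : \big[dprod/1]_(x <- b) <[x]> = G -> <<[set:: b]>> = G.
Proof.
move=> defG; rewrite -(bigdprodWY defG) bigcup_seq; apply/eqP.
rewrite eqEsubset !gen_subG; apply/andP; split.
  apply/subsetP=> x bx; rewrite mem_gen //; apply/bigcupP.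
  by exists x; [move: bx; rewrite inE | exact: cycle_id].
by apply/bigcupsP=> x bx; rewrite cycle_subG mem_gen ?inE.
Qed.

Lemma prod_expg_mem_gen b (e : gT -> nat) : \prod_(x <- b) x ^+ e x \in <<[set:: b]>>.
Proof. by rewrite big_seq group_prod // => x bx; rewrite groupX // mem_gen ?inE. Qed.

Lemma pos_span_bigdprod_cycle_lower b G rho : \big[dprod/1]_(x <- b) <[x]> = G ->
  \prod_(x <- b) x ^+ (#[x] - 1) \in pos_span [set:: b] rho ->
  (\sum_(x <- b) (#[x] - 1) <= rho)%N.
Proof.
elim: b G rho => [|x b IHb] G rho; first by rewrite big_nil.
rewrite !big_cons set_cons => defG; case/dprodP: (defG) => [[_ H _ defH] _ cxH _].
rewrite defH in defG cxH; have genH := bigdprod_cycle_gen defH.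
have cxB : [set:: b] \subset 'C[x].
  by rewrite -cent_cycle (subset_trans _ cxH) // -genH subset_gen.
case/(pos_span_setU1_cent cxB) => i le_i_rho [h span_h eq_prod].
set g := \prod_(y <- b) _ in eq_prod span_h *.
have Hg : g \in H by rewrite -genH prod_expg_mem_gen.
have Hh : h \in H by rewrite -genH (subsetP (pos_span_sub_gen _ _) _ span_h).
have Gxg : x ^+ (#[x] - 1) * g \in G.
  by rewrite -(dprodW defG) mem_mulg ?mem_cycle.
have [y [z [_ _ _ uniq_dprod]]] := mem_dprod defG Gxg.
have [eq_xi eq_hg] : x ^+ i = x ^+ (#[x] - 1) /\ h = g.
  have [-> ->] := uniq_dprod _ _ (mem_cycle x i) Hh eq_prod.
  by have [-> ->] := uniq_dprod _ _ (mem_cycle x _) Hg erefl.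
have le_ord_i : (#[x] - 1 <= i)%N.
  move/eqP: eq_xi; rewrite eq_expg_mod_order (modn_small (m := #[x] - 1)).
    by move/eqP <-; apply: leq_mod.
  by rewrite subn1 prednK ?order_gt0.
rewrite eq_hg in span_h.
by rewrite -(subnKC le_i_rho) leq_add // (IHb H).
Qed.

End LowerBound.

Lemma is_posdiam_min (gT : finGroupType) (G A : {set gT}) d :
  pos_span A d = G -> exists d', is_posdiam G A d' /\ (d' <= d)%N.
Proof.
move=> spanG; have ex_span : exists rho, pos_span A rho == G by exists d; rewrite spanG.
have [d' /eqP span_d' min_d'] := ex_minnP ex_span.
exists d'; split; last by apply: min_d'; rewrite spanG.
by split=> // rho span_rho; apply: min_d'; rewrite span_rho.
Qed.

Theorem theorem2p1 (gT : finGroupType) (G : {group gT}) (m : seq nat) :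
  abelian G -> has_type G m ->
  is_absdiam G (\sum_(mi <- m) (mi - 1))%N.
Proof.
move=> cGG [m_gt1 m_sorted [b [defG def_m]]].
have genG := bigdprod_cycle_gen defG.
have weightG : type_weight (abelian_type G) = (\sum_(mi <- m) (mi - 1))%N.
  rewrite (abelian_type_bigdprod_cycle cGG _ _ defG) ?def_m /type_weight ?big_rev //.
  by move: m_gt1; rewrite -def_m all_map.
have spanG (A : {set gT}) :
    A \subset G -> <<A>> = G -> pos_span A (\sum_(mi <- m) (mi - 1)) = G.
  by move=> sAG genA; rewrite -weightG pos_span_type_weight.
split=> [|A sAG genA]; last exact: is_posdiam_min (spanG A sAG genA).
have sbG : [set:: b] \subset G by rewrite -genG subset_gen.
exists [set:: b]; split=> //; split=> [|rho span_rho]; first exact: spanG.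
rewrite -def_m big_map (pos_span_bigdprod_cycle_lower defG) //.
by rewrite span_rho -genG prod_expg_mem_gen.
Qed.
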